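(* Let $K_{m_1,m_2}$ be the complete bipartite graph with bipartition $(X,Y)$, $|X|=m_1$, $|Y|=m_2$, where $2\le m_1\le m_2$, and let $s\ge 2$ be an integer. Then: (1) if $s\le m_2-m_1+2$, then $\kappa^*_{K_{m_1,m_2}}(S)=m_1$ for every $S\subseteq X\cup Y$ with $|S|=s$ and $S\not\subseteq X$; (2) if $2\le s\le m_1$, then $\kappa^*_{K_{m_1,m_2}}(S)=m_2$ for every $S\subseteq X$ with $|S|=s$; (3) if $m_2-m_1+3\le s\le m_1+m_2$, then $\kappa_s^*(K_{m_1,m_2})\ge m_1-\frac{m_1+s-m_2+2}{3}$.
   Context: For $S\subseteq V(G)$ with $|S|\ge 2$, an $S$-Steiner tree of $G$ is a subtree $T$ of $G$ with $S\subseteq V(T)$ all of whose leaves belong to $S$. A family of $S$-Steiner trees $T_1,\dots,T_k$ is completely independent if for all $1\le p<q\le k$: $E(T_p)\cap E(T_q)=\emptyset$, $V(T_p)\cap V(T_q)=S$, and for any two vertices $x_1,x_2\in S$ the $(x_1,x_2)$-paths in $T_p$ and in $T_q$ are internally disjoint. $\kappa^*_G(S)$ is the maximum number of trees in a completely independent family of $S$-Steiner trees in $G$, and $\kappa_s^*(G)=\min\{\kappa^*_G(S): S\subseteq V(G),\ |S|=s\}$. *)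

From Stdlib Require Import ClassicalEpsilon.
From mathcomp Require Import all_boot all_order all_algebra.
Set Implicit Arguments. Unset Strict Implicit. Unset Printing Implicit Defensive.

Section SteinerDefs.
Variable T : finType.

(* A simple graph on T is given by a symmetric irreflexive adjacency relation
   G; its edges are the 2-sets [set x; y] with G x y.
   A subgraph candidate is a pair (V, E) : vertex set, edge set. *)
Definition subg := ({set T} * {set {set T}})%type.

Definition sg_adj (H : subg) : rel T := fun a b => [set a; b] \in H.2.

Definition is_subtree (G : rel T) (H : subg) : Prop :=
  [/\ (forall f, f \in H.2 -> exists x y, G x y /\ f = [set x; y]),
      (forall f, f \in H.2 -> f \subset H.1),
      H.1 != set0,
      (forall x y, x \in H.1 -> y \in H.1 -> connect (sg_adj H) x y)
    & #|H.2| + 1 = #|H.1| ].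

Definition sg_deg (H : subg) (v : T) : nat := #|[set f in H.2 | v \in f]|.

Definition steiner_tree (G : rel T) (S : {set T}) (H : subg) : Prop :=
  [/\ is_subtree G H, S \subset H.1 &
      forall v, v \in H.1 -> sg_deg H v = 1 -> v \in S].

Definition sg_path (H : subg) (x y : T) (p : seq T) : Prop :=
  [/\ path (sg_adj H) x p, last x p = y & uniq (x :: p)].

Definition int_disjoint (x y : T) (p q : seq T) : Prop :=
  forall v, v \in x :: p -> v \in x :: q -> v = x \/ v = y.

Definition compl_indep_pair (S : {set T}) (H1 H2 : subg) : Prop :=
  [/\ H1.2 :&: H2.2 = set0,
      H1.1 :&: H2.1 = S &
      forall x1 x2 p q, x1 \in S -> x2 \in S ->
        sg_path H1 x1 x2 p -> sg_path H2 x1 x2 q -> int_disjoint x1 x2 p q].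

Definition has_ci_family (G : rel T) (S : {set T}) (k : nat) : Prop :=
  exists F : 'I_k -> subg,
    (forall i, steiner_tree G S (F i)) /\
    (forall i j : 'I_k, (i < j)%N -> compl_indep_pair S (F i) (F j)).

(* Each tree of a family has at
   least one edge (|S| >= 2) and edge sets are pairwise disjoint, so the size
   is < 2 ^ #|T| + 1; the max is taken over that range. *)
Definition kappa_star (G : rel T) (S : {set T}) : nat :=
  \max_(k < (2 ^ #|T|).+1)
     (if excluded_middle_informative (has_ci_family G S k) then val k else 0%N).

Definition kappa_s (G : rel T) (s : nat) : nat :=
  \big[minn/(2 ^ #|T|).+1]_(S : {set T} | #|S| == s) kappa_star G S.

End SteinerDefs.

Definition kbip (m1 m2 : nat) : rel ('I_m1 + 'I_m2)%type :=
  fun u v => match u, v with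
             | inl _, inr _ | inr _, inl _ => true
             | _, _ => false end.

Definition is_left (m1 m2 : nat) (u : ('I_m1 + 'I_m2)%type) : bool :=
  if u is inl _ then true else false.

Definition partX (m1 m2 : nat) : {set ('I_m1 + 'I_m2)%type} :=
  [set u | is_left u].

From mathcomp Require Import all_boot all_order all_algebra.
Import Order.TTheory GRing.Theory Num.Theory.
From mathcomp Require Import zify lra.
From Stdlib Require Import ClassicalEpsilon.
Set Implicit Arguments. Unset Strict Implicit. Unset Printing Implicit Defensive.

(* Upper bounds: every tree of a completely independent family needs an edge
   of its own at each vertex of S, so kappa*(S) is at most the degree of any
   vertex of S, i.e. m1 for a vertex of Y and m2 for a vertex of X.
   Lower bounds come from explicit trees given by a parent function that
   decreases a rank.  In such a tree every vertex of degree at least 2 is the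
   parent of some vertex, so trees whose vertex sets meet exactly in S, whose
   edge sets are disjoint and whose sets of parents are disjoint are
   completely independent.  If S lies in one side, the stars centred at the
   vertices of the other side do.  Otherwise every tree is a double star
   around an x-hub and a y-hub: vertices outside S are used as hubs first, and
   then vertices of S, either one per side (allowed for both sides in at most
   one tree) or in pairs whose colours keep the edge sets disjoint.  Counting
   the available hubs gives m1 trees when |S| <= m2 - m1 + 2, and at least
   m1 - (m1 + |S| - m2 + 2) / 3 trees in general. *)

Section SubgraphDegree.
Variable T : finType.
Implicit Types (H : subg T) (v x y : T) (p : seq T).

Lemma sg_deg_ge2 H v e1 e2 :
  e1 \in H.2 -> e2 \in H.2 -> v \in e1 -> v \in e2 -> e1 != e2 -> 1 < sg_deg H v.
Proof.
move=> e1H e2H ve1 ve2 e12; have <- : #|[set e1; e2]| = 2 by rewrite cards2 e12.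
by apply/subset_leq_card/subsetP => f; rewrite !inE => /orP[]/eqP->; apply/andP.
Qed.

Lemma sg_path_inner_deg H x y p v :
  sg_path H x y p -> v \in x :: p -> v != x -> v != y -> 1 < sg_deg H v.
Proof.
case=> xp lastp uxp; rewrite inE => /predU1P[-> | vp]; first by rewrite eqxx.
move=> _ vy; case/splitPr: vp xp lastp uxp => p1 p2.
rewrite cat_path last_cat => /andP[_ /andP[uv vp2]].
case: p2 vp2 => [_ vE | w p2 /andP[vw _] _ uxp]; first by move: vE vy => /= ->; rewrite eqxx.
move: uxp; rewrite -cat_cons cat_uniq => /and3P[_ + /andP[+ _]].
set u := last x p1; have up1 : u \in x :: p1 by apply: mem_last.
rewrite /= negb_or => /andP[vp1 /norP[wp1 _]] _.
have uv_ne : u != v by apply: contraNneq vp1 => <-.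
have uw_ne : u != w by apply: contraNneq wp1 => <-.
apply: (sg_deg_ge2 uv vw); rewrite ?set21 ?set22 //.
apply: contra_neq uw_ne => /setP/(_ u).
by rewrite set21 !inE (negbTE uv_ne) => /esym/eqP.
Qed.

End SubgraphDegree.

Section ParentTree.
Variables (T : finType) (G : rel T) (V : {set T}) (r : T) (par : T -> T).
Variable rk : T -> nat.
Hypothesis rV : r \in V.
Hypothesis parP : forall v, v \in V -> v != r ->
  [/\ par v \in V, G v (par v) & rk (par v) < rk v].

Definition ptree : subg T := (V, [set [set v; par v] | v in V :\ r]).

Definition children v := [set w in V :\ r | par w == v].

Lemma in_children w v : (w \in children v) = [&& w != r, w \in V & par w == v].
Proof. by rewrite !inE andbA. Qed.

Lemma par_neq v : v \in V -> v != r -> par v != v.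
Proof. by move=> vV vr; case: (parP vV vr) => _ _; apply: contraTneq => ->; rewrite ltnn. Qed.

Lemma ptree_edge_inj : {in V :\ r &, injective (fun v => [set v; par v])}.
Proof.
move=> v w /setD1P[vr vV] /setD1P[wr wV] vwE.
have /set2P[// | vpw] : v \in [set w; par w] by rewrite -vwE set21.
have /set2P[-> // | wpv] : w \in [set v; par v] by rewrite vwE set21.
case: (parP vV vr) (parP wV wr) => _ _ + [_ _].
by rewrite -vpw -wpv => /ltn_trans/[apply]; rewrite ltnn.
Qed.

Lemma ptree_connect_root v : v \in V -> connect (sg_adj ptree) v r.
Proof.
elim: {v}(rk v) {-2}v (leqnn (rk v)) => [|n IHn] v rkv vV.
all: have [-> | vr] := eqVneq v r; first exact: connect0.
all: have [pV _ rk_lt] := parP vV vr.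
  by move: rkv; rewrite leqn0 => /eqP rk0; rewrite rk0 in rk_lt.
apply: connect_trans (connect1 _) (IHn _ _ pV); last by rewrite -ltnS (leq_trans rk_lt).
by apply/imsetP; exists v; rewrite ?inE ?vr.
Qed.

Lemma ptree_subtree : is_subtree G ptree.
Proof.
split=> /=.
- by move=> _ /imsetP[v /setD1P[vr vV] ->]; exists v, (par v); case: (parP vV vr).
- move=> _ /imsetP[v /setD1P[vr vV] ->]; case: (parP vV vr) => pV _ _.
  by apply/subsetP => u /set2P[] ->.
- by apply/set0Pn; exists r.
- move=> x y xV yV; apply: connect_trans (ptree_connect_root xV) _.
  rewrite (sym_connect_sym (fun a b => _)) ?ptree_connect_root // => a b.
  by rewrite /sg_adj setUC.
- rewrite card_in_imset; last exact: ptree_edge_inj.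
  by rewrite (cardsD1 r V) rV addnC.
Qed.

Lemma ptree_deg v : v \in V -> sg_deg ptree v = #|children v| + (v != r).
Proof.
move=> vV; pose A := [set w in V :\ r | (w == v) || (par w == v)].
rewrite /sg_deg; have -> : [set f in ptree.2 | v \in f] = [set [set w; par w] | w in A].
  apply/setP => f; rewrite inE; apply/andP/imsetP => [[/imsetP[w wVr ->]] | [w]].
    by rewrite !inE => vw; exists w; rewrite // inE wVr eq_sym (eq_sym (par w)).
  rewrite inE => /andP[wVr vw] ->; split; first by apply/imsetP; exists w.
  by rewrite !inE eq_sym (eq_sym v).
rewrite card_in_imset; last first.
  by apply: sub_in2 ptree_edge_inj => w; rewrite inE => /andP[].
have [vr | vr] := eqVneq v r.
  rewrite /= addn0; apply: eq_card => w; rewrite /A !inE -vr.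
  by case: (w =P v).
have -> : A = v |: children v.
  apply/setP => w; rewrite /A !inE.
  by case: (w =P v) => [-> | _]; rewrite ?vr ?vV.
by rewrite cardsU1 addnC !inE (negbTE (par_neq vV vr)) andbF.
Qed.

Lemma ptree_deg_children v : 1 < sg_deg ptree v -> children v != set0.
Proof.
have [vV | vV] := boolP (v \in V).
  by rewrite ptree_deg // -card_gt0; case: (v != r) => /=; lia.
rewrite /sg_deg => /card_gt1P[f [_ [+ _ _]]].
rewrite !inE => /andP[/imsetP[w /setD1P[wr wV] ->]].
by case: (parP wV wr) => pV _ _ /set2P[] vE; rewrite vE ?wV ?pV in vV.
Qed.

Lemma ptree_steiner (S : {set T}) :
  S \subset V -> (forall v, v \in V -> v \notin S -> (v == r) < #|children v|) ->
  steiner_tree G S ptree.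
Proof.
move=> SV leafS; split=> //; first exact: ptree_subtree.
move=> v vV; rewrite ptree_deg //; apply: contra_eqT => vS.
by have := leafS v vV vS; case: (v == r) => /=; lia.
Qed.

End ParentTree.

Section ParentTreeFamily.
Variables (T : finType) (G : rel T) (S : {set T}) (k : nat).
Variables (V : 'I_k -> {set T}) (r : 'I_k -> T) (par : 'I_k -> T -> T).
Variable rk : 'I_k -> T -> nat.
Hypothesis rV : forall i, r i \in V i.
Hypothesis parP : forall i v, v \in V i -> v != r i ->
  [/\ par i v \in V i, G v (par i v) & rk i (par i v) < rk i v].
Hypothesis SV : forall i, S \subset V i.
Hypothesis leafS : forall i v, v \in V i -> v \notin S ->
  (v == r i) < #|children (V i) (r i) (par i) v|.
Hypothesis V_meet : forall i j, i != j -> V i :&: V j = S.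
Hypothesis edge_disj : forall i j v w, i != j -> v \in V i :\ r i -> w \in V j :\ r j ->
  [set v; par i v] != [set w; par j w].
Hypothesis par_disj : forall i j v w, i != j -> v \in V i :\ r i -> w \in V j :\ r j ->
  par i v != par j w.

Lemma ptree_ci_family : has_ci_family G S k.
Proof.
exists (fun i => ptree (V i) (r i) (par i)); split.
  by move=> i; apply: (ptree_steiner (rV i) (@parP i) (SV i)); apply: leafS.
move=> i j /ltn_eqF/negbT; rewrite val_eqE => ij; split=> /=; [| exact: V_meet |].
  apply/setP => f; rewrite !inE; apply/andP => -[/imsetP[v vV ->] /imsetP[w wV]].
  exact/eqP/edge_disj.
move=> x1 x2 p q _ _ pP qP v vp vq.
have [-> | v1] := eqVneq v x1; first by left.
have [-> | v2] := eqVneq v x2; first by right.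
have /set0Pn[w /setIdP[wV /eqP wv]] :=
  ptree_deg_children (rV i) (@parP i) (sg_path_inner_deg pP vp v1 v2).
have /set0Pn[w' /setIdP[wV' /eqP w'v]] :=
  ptree_deg_children (rV j) (@parP j) (sg_path_inner_deg qP vq v1 v2).
by have := par_disj ij wV wV'; rewrite wv w'v eqxx.
Qed.

End ParentTreeFamily.

Lemma bigminn_le (I : finType) (P : pred I) (F : I -> nat) idx j :
  P j -> \big[minn/idx]_(i | P i) F i <= F j.
Proof.
move=> Pj; have : j \in index_enum I by rewrite mem_index_enum.
elim: (index_enum I) => // i r IHr; rewrite inE big_cons => /predU1P[<- | /IHr].
  by rewrite Pj geq_minl.
by case: ifP => // _ /(leq_trans _)->; rewrite ?geq_minr.
Qed.

Section KappaStar.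
Variables (T : finType) (G : rel T).
Implicit Type S : {set T}.

Lemma kappa_star_ge S k : has_ci_family G S k -> k <= #|T| -> k <= kappa_star G S.
Proof.
move=> famk kT; have k_lt : k < (2 ^ #|T|).+1.
  by rewrite ltnS (leq_trans kT) // ltnW // ltn_expl.
rewrite /kappa_star; apply: leq_trans (leq_bigmax (Ordinal k_lt)) => /=.
by case: excluded_middle_informative.
Qed.

Lemma kappa_star_le S n : (forall k, has_ci_family G S k -> k <= n) -> kappa_star G S <= n.
Proof.
move=> famn; apply/bigmax_leqP => k _.
by case: excluded_middle_informative => // famk; apply: famn.
Qed.

Lemma kappa_star_lt_idx S : kappa_star G S < (2 ^ #|T|).+1.
Proof.
rewrite ltnS; apply/bigmax_leqP => k _.
by case: excluded_middle_informative => famk /=; rewrite // -ltnS.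
Qed.

Lemma kappa_s_attained s :
  s <= #|T| -> exists2 S : {set T}, #|S| = s & kappa_s G s = kappa_star G S.
Proof.
move=> sT; pose S0 : {set T} := [set x in take s (enum T)].
have S0s : #|S0| = s.
  by rewrite cardsE (card_uniqP _) ?take_uniq ?enum_uniq // size_takel // -cardT.
have : kappa_s G s = (2 ^ #|T|).+1 \/
       exists2 S : {set T}, #|S| = s & kappa_s G s = kappa_star G S.
  apply: (big_ind (fun x => x = _ \/ exists2 S : {set T}, #|S| = s & x = kappa_star G S)).
  - by left.
  - by move=> x y Px Py; rewrite /minn; case: ltnP.
  - by move=> S /eqP Ss; right; exists S.
case=> // kE; have := kappa_star_lt_idx S0; rewrite -kE ltnNge => /negP[].
by apply: bigminn_le; rewrite S0s.
Qed.

Hypotheses (Gsym : symmetric G) (Girr : irreflexive G).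

Lemma subtree_edge_at H v w : is_subtree G H -> v \in H.1 -> w \in H.1 -> v != w ->
  exists2 u, [set v; u] \in H.2 & G v u.
Proof.
case=> edgeG _ _ conH _ vH wH vw; have /connectP[[|u p] /= + wE] := conH v w vH wH.
  by move=> _; rewrite -wE eqxx in vw.
case/andP=> vu _; exists u => //; have [x [y [Gxy xyE]]] := edgeG _ vu.
have xy : x != y by apply: contraTneq Gxy => ->; rewrite Girr.
have /set2P[vx | vy] : v \in [set x; y] by rewrite -xyE set21.
- have /set2P[uv | <-] : y \in [set v; u] by rewrite xyE set22.
    by rewrite -vx uv eqxx in xy.
  by rewrite vx.
- have /set2P[xv | <-] : x \in [set v; u] by rewrite xyE set21.
    by rewrite xv vy eqxx in xy.
  by rewrite Gsym vy.
Qed.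

Lemma ci_family_le_deg S k v w : has_ci_family G S k -> v \in S -> w \in S -> v != w ->
  k <= #|[set u | G v u]|.
Proof.
case=> F [treeF indepF] vS wS vw.
have nbr i : exists u, ([set v; u] \in (F i).2) && G v u.
  have [subF SF _] := treeF i.
  have [u ? ?] := subtree_edge_at subF (subsetP SF v vS) (subsetP SF w wS) vw.
  by exists u; apply/andP.
pose f i := xchoose (nbr i).
have fP i : ([set v; f i] \in (F i).2) && G v (f i) := xchooseP (nbr i).
have f_neq (i j : 'I_k) : i < j -> f i != f j.
  move=> lt_ij; have [Eij _ _] := indepF i j lt_ij; apply/eqP => fij.
  have /andP[Fi _] := fP i; have /andP[Fj _] := fP j; rewrite -fij in Fj.
  have : [set v; f i] \in (F i).2 :&: (F j).2 by rewrite inE Fi Fj.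
  by rewrite Eij inE.
have f_inj : injective f.
  by move=> i j; apply: contra_eq; rewrite neq_ltn => /orP[/f_neq // | /f_neq]; rewrite eq_sym.
rewrite -{1}(card_ord k) -cardsT -(card_imset _ f_inj).
by apply/subset_leq_card/subsetP => _ /imsetP[i _ ->]; rewrite inE; case/andP: (fP i).
Qed.

Lemma kappa_star_le_deg S v : v \in S -> 1 < #|S| -> kappa_star G S <= #|[set u | G v u]|.
Proof.
move=> vS /card_gt1P[x [y [xS yS xy]]]; apply: kappa_star_le => k famk.
have [w wS vw] : exists2 w, w \in S & v != w.
  by have [vx | ] := eqVneq v x; [exists y; rewrite // vx | exists x].
exact: ci_family_le_deg famk vS wS vw.
Qed.

End KappaStar.

Lemma star_ci_family (T : finType) (G : rel T) (S : {set T}) k (c : 'I_k -> T) :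
  injective c -> (forall i, c i \notin S) -> (forall i v, v \in S -> G v (c i)) ->
  1 < #|S| -> has_ci_family G S k.
Proof.
move=> c_inj cS Gc S_gt1.
apply: (@ptree_ci_family _ G S k (fun i => c i |: S) c (fun i _ => c i) (fun i v => v != c i)).
- by move=> i; rewrite setU11.
- move=> i v /setU1P[-> | vS]; first by rewrite eqxx.
  by move=> vc; rewrite setU11 Gc // eqxx vc.
- by move=> i; apply: subsetUr.
- move=> i v /setU1P[-> _ | vS]; last by rewrite vS.
  rewrite eqxx; apply: leq_trans S_gt1 (subset_leq_card _).
  apply/subsetP => w wS; rewrite !inE wS orbT eqxx !andbT.
  by apply: contraNneq (cS i) => <-.
- move=> i j ij; apply/setP => v; rewrite !inE.
  case: (v \in S); rewrite ?orbT ?orbF //; apply/negP => /andP[/eqP -> /eqP /c_inj ji].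
  by rewrite ji eqxx in ij.
- move=> i j v w ij; rewrite !inE => /andP[vc /predU1P[vE | vS]].
    by rewrite vE eqxx in vc.
  case/andP=> wc /predU1P[wE | wS]; first by rewrite wE eqxx in wc.
  apply: contra_neq ij => /setP/(_ (c i)); rewrite set22 => /esym/set2P[ciE | /c_inj //].
  by have := cS i; rewrite ciE wS.
- by move=> i j v w ij _ _; rewrite (inj_eq c_inj).
Qed.

Section CompleteBipartite.
Variables m1 m2 : nat.
Local Notation T := ('I_m1 + 'I_m2)%type.
Local Notation G := (@kbip m1 m2).
Implicit Type S : {set T}.

Definition SX S := [set x | inl x \in S].
Definition SY S := [set y | inr y \in S].

Lemma kbip_sym : symmetric G.
Proof. by do 2!case. Qed.

Lemma kbip_irr : irreflexive G.
Proof. by case. Qed.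

Lemma card_kbip : #|{: T}| = m1 + m2.
Proof. by rewrite card_sum !card_ord. Qed.

Lemma card_kbip_nbr_inl x : #|[set u | G (inl x) u]| = m2.
Proof.
have -> : [set u | G (inl x) u] = inr @: [set: 'I_m2].
  apply/setP => -[u | u]; rewrite !inE /=; last by apply/esym/imsetP; exists u; rewrite ?inE.
  by apply/esym/negbTE/imsetP => -[].
by rewrite card_imset ?cardsT ?card_ord //; apply: inr_inj.
Qed.

Lemma card_kbip_nbr_inr y : #|[set u | G (inr y) u]| = m1.
Proof.
have -> : [set u | G (inr y) u] = inl @: [set: 'I_m1].
  apply/setP => -[u | u]; rewrite !inE /=; first by apply/esym/imsetP; exists u; rewrite ?inE.
  by apply/esym/negbTE/imsetP => -[].
by rewrite card_imset ?cardsT ?card_ord //; apply: inl_inj.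
Qed.

Lemma kappa_star_le_inl S x : inl x \in S -> 1 < #|S| -> kappa_star G S <= m2.
Proof.
move=> xS S_gt1.
by have := kappa_star_le_deg kbip_sym kbip_irr xS S_gt1; rewrite card_kbip_nbr_inl.
Qed.

Lemma kappa_star_le_inr S y : inr y \in S -> 1 < #|S| -> kappa_star G S <= m1.
Proof.
move=> yS S_gt1.
by have := kappa_star_le_deg kbip_sym kbip_irr yS S_gt1; rewrite card_kbip_nbr_inr.
Qed.

Lemma in_SX S x : (x \in SX S) = (inl x \in S).
Proof. by rewrite inE. Qed.

Lemma in_SY S y : (y \in SY S) = (inr y \in S).
Proof. by rewrite inE. Qed.

Lemma card_SXY S : #|S| = #|SX S| + #|SY S|.
Proof.
by rewrite -!sum1_card big_sumType; congr (_ + _); apply: eq_bigl => u; rewrite inE.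
Qed.

Lemma card_SXC S : #|SX S| + #|~: SX S| = m1.
Proof. by rewrite cardsC card_ord. Qed.

Lemma card_SYC S : #|SY S| + #|~: SY S| = m2.
Proof. by rewrite cardsC card_ord. Qed.

Lemma sub_partX S : (S \subset partX m1 m2) = (SY S == set0).
Proof.
apply/subsetP/eqP => [SX | SY0 [x | y]]; last by rewrite -in_SY SY0 inE.
  by apply/setP => y; rewrite in_SY inE; apply/negP => /SX; rewrite inE.
by rewrite inE.
Qed.

Lemma kappa_star_ge_SY0 S : SY S = set0 -> 1 < #|S| -> m2 <= kappa_star G S.
Proof.
move=> SY0 S_gt1; apply: kappa_star_ge; last by rewrite card_kbip leq_addl.
apply: (@star_ci_family _ G S m2 inr) => //; first exact: inr_inj.
  by move=> y; rewrite -in_SY SY0 inE.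
by move=> y [x | y'] //; rewrite -in_SY SY0 inE.
Qed.

Lemma kappa_star_ge_SX0 S : SX S = set0 -> 1 < #|S| -> m1 <= kappa_star G S.
Proof.
move=> SX0 S_gt1; apply: kappa_star_ge; last by rewrite card_kbip leq_addr.
apply: (@star_ci_family _ G S m1 inl) => //; first exact: inl_inj.
  by move=> x; rewrite -in_SX SX0 inE.
by move=> x [x' | y] //; rewrite -in_SX SX0 inE.
Qed.

End CompleteBipartite.

Section DoubleStarFamily.
Variables (m1 m2 : nat) (S : {set 'I_m1 + 'I_m2}) (k : nat).
Local Notation T := ('I_m1 + 'I_m2)%type.
Variables (twin : bool) (colour : T -> bool).
Variables (hx : 'I_k -> bool -> 'I_m1) (hy : 'I_k -> bool -> 'I_m2).
Hypothesis hx_free : forall i t, inl (hx i t) \notin S -> hx i (~~ t) = hx i t.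
Hypothesis hy_free : forall i t, inr (hy i t) \notin S -> hy i (~~ t) = hy i t.
Hypothesis hx_S : forall i t, inl (hx i t) \in S ->
  if twin then colour (inl (hx i t)) = t else hx i (~~ t) = hx i t.
Hypothesis hy_S : forall i t, inr (hy i t) \in S ->
  if twin then colour (inr (hy i t)) = t else hy i (~~ t) = hy i t.
Hypothesis hx_disj : forall i j t t', hx i t = hx j t' -> i = j.
Hypothesis hy_disj : forall i j t t', hy i t = hy j t' -> i = j.
Hypothesis S_hubs_one_tree : ~~ twin -> forall i j t t',
  inl (hx i t) \in S -> inr (hy j t') \in S -> i = j.
Hypothesis SX_gt0 : 0 < #|SX S|.
Hypothesis SY_gt0 : 0 < #|SY S|.
Hypothesis SX_gt1 : forall i, inl (hx i true) \in S -> inr (hy i true) \notin S -> 1 < #|SX S|.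
Hypothesis SY_gt1 : forall i, inr (hy i true) \in S -> inl (hx i true) \notin S -> 1 < #|SY S|.

(* A vertex of S of colour
   c hangs from hx i c if it lies in Y and from hy i (~~ c) if it lies in X; a
   hub outside S hangs from the other hub labelled true.  Hubs outside S are
   single, and twin hubs taken from S are coloured by their label. *)
Definition hubs i : seq T :=
  [:: inl (hx i true); inr (hy i true); inl (hx i false); inr (hy i false)].

Definition ds_colour i (v : T) := if v \in S then colour v else v == inr (hy i true).

Definition ds_par i (v : T) : T :=
  if v is inl _ then inr (hy i (~~ ds_colour i v)) else inl (hx i (ds_colour i v)).

Definition ds_verts i := S :|: [set v in hubs i].

Definition ds_root i : T := inl (hx i true).

(* Parents come before their children in hubs i; the other vertices of S come
   last. *)
Definition ds_rank i (v : T) := index v (hubs i).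

Lemma hx_const i t t' : ~~ twin || (inl (hx i t) \notin S) -> hx i t' = hx i t.
Proof.
move=> single; have E : hx i (~~ t) = hx i t.
  have [tS | /hx_free //] := boolP (inl (hx i t) \in S).
  by move: single (hx_S tS); rewrite tS orbF => /negbTE ->.
by move: t' E; clear single; case: t => -[].
Qed.

Lemma hy_const i t t' : ~~ twin || (inr (hy i t) \notin S) -> hy i t' = hy i t.
Proof.
move=> single; have E : hy i (~~ t) = hy i t.
  have [tS | /hy_free //] := boolP (inr (hy i t) \in S).
  by move: single (hy_S tS); rewrite tS orbF => /negbTE ->.
by move: t' E; clear single; case: t => -[].
Qed.

Lemma hubP i v : v \in hubs i -> (exists t, v = inl (hx i t)) \/ (exists t, v = inr (hy i t)).
Proof. by rewrite !inE => /or4P[]/eqP->; [left | right | left | right]; eexists. Qed.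

Lemma ds_par_hub i v : ds_par i v \in hubs i.
Proof. by case: v => v /=; [case: (~~ _) | case: ds_colour]; rewrite !inE eqxx ?orbT. Qed.

Lemma ds_par_verts i v : ds_par i v \in ds_verts i.
Proof. by rewrite in_setU in_set ds_par_hub orbT. Qed.

Lemma ds_verts_hub i v : v \in ds_verts i -> v \notin S -> v \in hubs i.
Proof. by rewrite in_setU in_set => /orP[-> |]. Qed.

Lemma ds_par_neq i v : ds_par i v != v.
Proof. by case: v. Qed.

Lemma ds_rank_inl i t : ds_rank i (inl (hx i t)) <= 2.
Proof. by rewrite /ds_rank /=; case: t; rewrite eqxx //; case: ifP. Qed.

Lemma ds_rank_lt i v : v != ds_root i -> ds_rank i (ds_par i v) < ds_rank i v.
Proof.
move=> vr; have [vE | vy1] := eqVneq v (inr (hy i true)).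
  suff -> : ds_par i v = ds_root i by rewrite /ds_rank /= eqxx eq_sym (negbTE vr).
  rewrite vE /= /ds_colour; congr inl; case: ifP => [yS | _]; last by rewrite eqxx.
  by case: ifP (hy_S yS) => [_ -> // | /negbT single _]; apply: hx_const; rewrite single.
have [vE | vx2] := eqVneq v (inl (hx i false)).
  have [tw xS] : twin /\ inl (hx i false) \in S.
    apply/andP; apply: contraNT vr; rewrite vE /ds_root negb_and.
    by move/(@hx_const i false true) ->; rewrite eqxx.
  move: (hx_S xS); rewrite tw vE /= /ds_colour xS => -> /=.
  rewrite /ds_rank /= eqxx; move: vr; rewrite vE eq_sym => /negbTE -> //.
case: v vr vy1 vx2 => u vr vy1 vx2.
  have -> : ds_rank i (inl u) = 4.
    by move: vr vx2; rewrite /ds_rank /ds_root /= !(eq_sym (inl u)) => /negbTE-> /negbTE->.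
  by rewrite -[4]/(size (hubs i)) index_mem ds_par_hub.
apply: leq_ltn_trans (ds_rank_inl _ _) _.
by rewrite /ds_rank /= eq_sym (negbTE vy1) /=.
Qed.

Lemma ds_leaf i v : v \in ds_verts i -> v \notin S ->
  (v == ds_root i) < #|children (ds_verts i) (ds_root i) (ds_par i) v|.
Proof.
move=> vV vS; case/hubP: (ds_verts_hub vV vS) => -[t vE]; rewrite vE in vS *.
- have single t' : hx i t' = hx i t by apply: hx_const; rewrite vS orbT.
  have [y1 [y2 [y1V y2V y12]]] :
      exists y1 y2, [/\ inr y1 \in ds_verts i, inr y2 \in ds_verts i & y1 != y2].
    have [yS | yS] := boolP (inr (hy i true) \in S).
      have /card_gt1P[y1 [y2 [y1S y2S y12]]] : 1 < #|SY S|.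
        by apply: (SY_gt1 yS); rewrite single.
      by rewrite !in_SY in y1S y2S; exists y1, y2; rewrite !in_setU y1S y2S.
    have /card_gt0P[y yS'] := SY_gt0; rewrite in_SY in yS'.
    exists (hy i true), y; rewrite !in_setU yS' in_set !inE eqxx !orbT; split=> //.
    by apply: contraNneq yS => ->.
  rewrite /ds_root single eqxx; apply/card_gt1P; exists (inr y1), (inr y2).
  by rewrite !in_children y1V y2V /= !single eqxx (inj_eq inr_inj).
- have single t' : hy i t' = hy i t by apply: hy_const; rewrite vS orbT.
  have [x xS xr] : exists2 x, inl x \in S & x != hx i true.
    have [rS | rS] := boolP (inl (hx i true) \in S).
      have /card_gt1P[x1 [x2 [x1S x2S x12]]] : 1 < #|SX S|.
        by apply: (SX_gt1 rS); rewrite single.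
      have [x1r | ] := eqVneq x1 (hx i true); last by exists x1; rewrite -?in_SX.
      by exists x2; rewrite -?in_SX // -x1r eq_sym.
    have /card_gt0P[x xS] := SX_gt0; exists x; rewrite -?in_SX //.
    by apply: contraNneq rS => <-; rewrite -in_SX.
  apply/card_gt0P; exists (inl x).
  by rewrite in_children (inj_eq inl_inj) xr in_setU xS /= single eqxx.
Qed.

Lemma ds_verts_meet i j : i != j -> ds_verts i :&: ds_verts j = S.
Proof.
move=> ij; apply/setP => v; rewrite inE; have [vS | vS] := boolP (v \in S).
  by rewrite !in_setU vS.
apply/negbTE/andP => -[/ds_verts_hub/(_ vS)/hubP vi /ds_verts_hub/(_ vS)/hubP vj].
case: vi vj => -[t ->] [] [t' []] // => [/hx_disj | /hy_disj] eij; by rewrite eij eqxx in ij.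
Qed.

Lemma ds_par_disj i j v w : i != j -> ds_par i v != ds_par j w.
Proof.
move=> ij; apply: contra_neq ij.
by case: v w => ? [] ? //= [] => [/hy_disj | /hx_disj].
Qed.

Lemma ds_par_colour i v : twin -> v \in S -> ds_par i v \in S ->
  colour (ds_par i v) = (if v is inl _ then ~~ colour v else colour v).
Proof.
move=> tw vS; case: v vS => u uS /=; rewrite /ds_colour uS.
  by move/hy_S; rewrite tw.
by move/hx_S; rewrite tw.
Qed.

Lemma ds_par_S_tree i j v w : i != j -> v \in S -> w \in S ->
  v = ds_par j w -> w = ds_par i v -> twin.
Proof.
move=> ij vS wS vE wE; apply: contraTT ij => /S_hubs_one_tree hub1.
case: v vS vE wE => u uS vE wE; rewrite /= in wE; rewrite wE /= in vE.
  by move: uS wS; rewrite vE wE => /hub1 /[apply] ->; rewrite eqxx.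
by move: uS wS; rewrite vE wE => yS /hub1/(_ yS) ->; rewrite eqxx.
Qed.

Lemma ds_edge_disj i j v w : i != j -> v \in ds_verts i -> w \in ds_verts j ->
  [set v; ds_par i v] != [set w; ds_par j w].
Proof.
move=> ij vV wV; apply/eqP => vwE.
have inS u : u \in [set v; ds_par i v] -> u \in S.
  move=> uE; have uE' : u \in [set w; ds_par j w] by rewrite -vwE.
  rewrite -(ds_verts_meet ij) inE; apply/andP; split.
    by case/set2P: uE => ->; rewrite ?ds_par_verts.
  by case/set2P: uE' => ->; rewrite ?ds_par_verts.
have vS := inS v (set21 _ _); have pS := inS _ (set22 _ _).
have /set2P[vw | vp] : v \in [set w; ds_par j w] by rewrite -vwE set21.
  have /set2P[pw | pp] : ds_par i v \in [set w; ds_par j w] by rewrite -vwE set22.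
    by have := ds_par_neq i v; rewrite pw vw eqxx.
  by have := ds_par_disj v w ij; rewrite pp eqxx.
have /set2P[wv | wp] : w \in [set v; ds_par i v] by rewrite vwE set21.
  by have := ds_par_neq j w; rewrite -vp wv eqxx.
(* v and w are each other's parents: only twin hubs allow this, and then the
   colour rules clash. *)
have wS : w \in S by rewrite wp.
have tw := ds_par_S_tree ij vS wS vp wp.
have pwS : ds_par j w \in S by rewrite -vp.
move: (ds_par_colour tw vS pS) (ds_par_colour tw wS pwS); rewrite -vp -wp.
by case: v wp {vV vS vwE inS pS vp}; case: w {wV wS pwS} => u' u //= _ ->; case: (colour _).
Qed.

Lemma double_star_ci_family : has_ci_family (@kbip m1 m2) S k.
Proof.
apply: (@ptree_ci_family _ _ S k ds_verts ds_root ds_par ds_rank).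
- by move=> i; rewrite in_setU in_set mem_head orbT.
- by move=> i v vV vr; split; [exact: ds_par_verts | case: v {vV vr} | exact: ds_rank_lt].
- by move=> i; apply: subsetUl.
- exact: ds_leaf.
- exact: ds_verts_meet.
- by move=> i j v w ij /setD1P[_ vV] /setD1P[_ wV]; apply: ds_edge_disj.
- by move=> i j v w ij _ _; apply: ds_par_disj.
Qed.

End DoubleStarFamily.

Lemma nth_enum_inj (U : finType) (A : {set U}) (d : U) a b :
  a < #|A| -> b < #|A| -> nth d (enum A) a = nth d (enum A) b -> a = b.
Proof. by move=> aA bA /eqP; rewrite nth_uniq ?enum_uniq -?cardE // => /eqP. Qed.

Section SideHubs.
Variables (U : finType) (A : {set U}) (d : U) (twin : bool) (nf k : nat).
Hypothesis nf_le : nf <= #|~: A|.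
Hypothesis hubs_le : (if twin then (k - nf).*2 else k - nf) <= #|A|.

(* Tree i < nf gets the i-th vertex outside A as single hub; the other trees
   take the vertex at position i - nf of enum A or, for twin hubs, the two at
   positions 2 (i - nf) and 2 (i - nf) + 1, whose parities are their colours. *)
Definition side_colour (u : U) := ~~ odd (index u (enum A)).

Definition hub_index i (t : bool) := if twin then (i - nf).*2 + ~~ t else i - nf.

Definition side_hub (i : 'I_k) t :=
  if i < nf then nth d (enum (~: A)) i else nth d (enum A) (hub_index i t).

Lemma hub_index_lt (i : 'I_k) t : nf <= i -> hub_index i t < #|A|.
Proof.
move=> nfi; have := ltn_ord i; move: hubs_le; rewrite /hub_index.
by case: twin; case: t => /=; lia.
Qed.

Lemma side_hub_in (i : 'I_k) t : (side_hub i t \in A) = (nf <= i).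
Proof.
rewrite /side_hub; case: ltnP => nfi.
  have : nth d (enum (~: A)) i \in ~: A by rewrite -mem_enum mem_nth // -cardE; lia.
  by rewrite inE => /negbTE.
by rewrite -mem_enum mem_nth // -cardE hub_index_lt.
Qed.

Lemma side_hub_const (i : 'I_k) t t' : ~~ twin || (i < nf) -> side_hub i t' = side_hub i t.
Proof. by rewrite /side_hub /hub_index; case: twin; case: ltnP. Qed.

Lemma side_hub_inj (i j : 'I_k) t t' : side_hub i t = side_hub j t' -> i = j.
Proof.
move=> E; apply: val_inj; have := side_hub_in i t; rewrite E side_hub_in.
move: E; rewrite /side_hub; case: ltnP => nfi; case: ltnP => nfj // E _.
  by apply: nth_enum_inj E; lia.
move/nth_enum_inj: E => /(_ (hub_index_lt _ nfi) (hub_index_lt _ nfj)).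
by rewrite /hub_index; case: twin; case: t; case: t' => /=; lia.
Qed.

Lemma side_hub_colour (i : 'I_k) t : twin -> nf <= i -> side_colour (side_hub i t) = t.
Proof.
move=> tw nfi; rewrite /side_colour /side_hub ltnNge nfi /=.
rewrite index_uniq ?enum_uniq -?cardE ?hub_index_lt // /hub_index tw oddD odd_double.
by case: t.
Qed.

End SideHubs.

Section HubChoice.
Variables (m1 m2 : nat) (S : {set 'I_m1 + 'I_m2}).
Variables (twin : bool) (nfx nfy k : nat).
Hypotheses (SX_gt0 : 0 < #|SX S|) (SY_gt0 : 0 < #|SY S|).
Hypotheses (nfx_le : nfx <= #|~: SX S|) (nfy_le : nfy <= #|~: SY S|).
Hypothesis hubsX_le : (if twin then (k - nfx).*2 else k - nfx) <= #|SX S|.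
Hypothesis hubsY_le : (if twin then (k - nfy).*2 else k - nfy) <= #|SY S|.
Hypothesis S_hubs_one_tree :
  ~~ twin -> forall i j, i < k -> j < k -> nfx <= i -> nfy <= j -> i = j.
Hypothesis SX_gt1 : ~~ twin -> nfx < minn nfy k -> 1 < #|SX S|.
Hypothesis SY_gt1 : ~~ twin -> nfy < minn nfx k -> 1 < #|SY S|.

Definition kbip_colour (v : 'I_m1 + 'I_m2) :=
  match v with inl x => side_colour (SX S) x | inr y => side_colour (SY S) y end.

Lemma hub_ci_family : has_ci_family (@kbip m1 m2) S k.
Proof.
have /card_gt0P[x0 _] := SX_gt0; have /card_gt0P[y0 _] := SY_gt0.
pose hx := @side_hub _ (SX S) x0 twin nfx k; pose hy := @side_hub _ (SY S) y0 twin nfy k.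
have hx_in (i : 'I_k) t : (inl (hx i t) \in S) = (nfx <= i).
  by rewrite -in_SX side_hub_in.
have hy_in (i : 'I_k) t : (inr (hy i t) \in S) = (nfy <= i) by rewrite -in_SY side_hub_in.
apply: (@double_star_ci_family _ _ S k twin kbip_colour hx hy) => //.
- by move=> i t; rewrite hx_in -ltnNge => lt; apply: side_hub_const; rewrite lt orbT.
- by move=> i t; rewrite hy_in -ltnNge => lt; apply: side_hub_const; rewrite lt orbT.
- move=> i t; rewrite hx_in => nfi; case: ifP => tw; first by apply: side_hub_colour.
  by apply: side_hub_const; rewrite tw.
- move=> i t; rewrite hy_in => nfi; case: ifP => tw; first by apply: side_hub_colour.
  by apply: side_hub_const; rewrite tw.
- by move=> i j t t'; apply: side_hub_inj.
- by move=> i j t t'; apply: side_hub_inj.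
- move=> single i j t t'; rewrite hx_in hy_in => nfi nfj; apply: val_inj.
  exact: S_hubs_one_tree single i j (ltn_ord i) (ltn_ord j) nfi nfj.
- move=> i; rewrite hx_in hy_in -ltnNge => nfi ilt; have ik := ltn_ord i.
  case: (boolP twin) hubsX_le => [_ /= | single _]; first lia.
  by apply: SX_gt1 single _; rewrite leq_min; apply/andP; split; lia.
- move=> i; rewrite hx_in hy_in -ltnNge => nfi ilt; have ik := ltn_ord i.
  case: (boolP twin) hubsY_le => [_ /= | single _]; first lia.
  by apply: SY_gt1 single _; rewrite leq_min; apply/andP; split; lia.
Qed.

Lemma kappa_star_ge_hubs : k <= m1 + m2 -> k <= kappa_star (@kbip m1 m2) S.
Proof. by move=> km; apply: kappa_star_ge hub_ci_family _; rewrite card_kbip. Qed.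

End HubChoice.

Section LowerBounds.
Variables (m1 m2 : nat) (S : {set 'I_m1 + 'I_m2}).
Hypotheses (SX_gt0 : 0 < #|SX S|) (SY_gt0 : 0 < #|SY S|).
Local Notation G := (@kbip m1 m2).

(* The cardinalities are generalized before lia: they occur under different but
   convertible instances, which lia would take for unrelated atoms. *)
Lemma kappa_star_ge_twin :
  minn (#|~: SX S| + #|SX S| %/ 2) (#|~: SY S| + #|SY S| %/ 2) <= kappa_star G S.
Proof.
move: (card_SXC S) (card_SYC S) SX_gt0 SY_gt0 (@kappa_star_ge_hubs _ _ S true).
move: #|SX S| #|~: SX S| #|SY S| #|~: SY S| => a fx b fy aE bE a0 b0 hub_lb.
set k := minn _ _; apply: (hub_lb (minn fx k) (minn fy k) k) => //=; rewrite /k -?muln2; lia.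
Qed.

Lemma kappa_star_ge_mixed_small : m1 <= m2 -> #|S| <= m2 - m1 + 2 -> m1 <= kappa_star G S.
Proof.
move: (card_SXY S) (card_SXC S) (card_SYC S) SX_gt0 SY_gt0 (@kappa_star_ge_hubs _ _ S false).
move: #|S| #|SX S| #|~: SX S| #|SY S| #|~: SY S| => s a fx b fy sE aE bE a0 b0 hub_lb m12 sS.
have [a_gt1 | a_le1] := ltnP 1 a.
  by apply: (hub_lb fx m1 m1) => //=; try lia; move=> _ i j *; lia.
(* The only vertex of S in X is the x-hub of the last tree, whose y-hub is
   then taken from S as well. *)
by apply: (hub_lb fx m1.-1 m1) => //=; try lia; move=> _ i j *; lia.
Qed.

Lemma kappa_star_ge_mixed_large : m1 <= m2 -> m2 - m1 + 3 <= #|S| ->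
  3 * m1 <= 3 * kappa_star G S + (m1 + #|S| - m2 + 2).
Proof.
move: kappa_star_ge_twin (card_SXY S) (card_SXC S) (card_SYC S) SX_gt0 SY_gt0.
move: (@kappa_star_ge_hubs _ _ S false).
move: #|S| #|SX S| #|~: SX S| #|SY S| #|~: SY S| => s a fx b fy hub_lb.
move=> twin_lb sE aE bE a0 b0 m12 sS.
have [fxy | fyx] := leqP fx fy.
  have [a_small | ] := leqP a (2 * (fy - fx) + 2); last lia.
  have : fx + minn a (fy - fx) <= kappa_star G S.
    pose k := fx + minn a (fy - fx).
    by apply: (hub_lb fx k k) => //=; rewrite /k; try lia; move=> _ i j *; lia.
  lia.
have [a_small | ] := leqP a (fx - fy + 2); last lia.
have : fx <= kappa_star G S by apply: (hub_lb fx fy fx) => //=; try lia; move=> _ i j *; lia.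
lia.
Qed.

End LowerBounds.

Section KbipKappa.
Variables (m1 m2 : nat) (S : {set 'I_m1 + 'I_m2}).
Hypothesis m12 : m1 <= m2.
Hypothesis S_gt1 : 1 < #|S|.
Local Notation G := (@kbip m1 m2).

Lemma kappa_star_meetY y : inr y \in S -> #|S| <= m2 - m1 + 2 -> kappa_star G S = m1.
Proof.
move=> yS sS; apply/eqP; rewrite eqn_leq; apply/andP; split.
  exact: kappa_star_le_inr yS S_gt1.
have [SX0 | ] := eqVneq (SX S) set0; first exact: kappa_star_ge_SX0.
rewrite -card_gt0 => a0; apply: kappa_star_ge_mixed_small => //.
by apply/card_gt0P; exists y; rewrite in_SY.
Qed.

Lemma kappa_star_subX : S \subset partX m1 m2 -> kappa_star G S = m2.
Proof.
rewrite sub_partX => /eqP SY0; apply/eqP; rewrite eqn_leq kappa_star_ge_SY0 // andbT.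
have /card_gt0P[[x | y] vS] : 0 < #|S| by apply: ltnW.
  exact: kappa_star_le_inl vS S_gt1.
by move: vS; rewrite -in_SY SY0 inE.
Qed.

Lemma kappa_star_ge_large : m2 - m1 + 3 <= #|S| ->
  3 * m1 <= 3 * kappa_star G S + (m1 + #|S| - m2 + 2).
Proof.
move=> sS; have [SY0 | ] := eqVneq (SY S) set0.
  by have := kappa_star_ge_SY0 SY0 S_gt1; lia.
have [SX0 | ] := eqVneq (SX S) set0.
  by have := kappa_star_ge_SX0 SX0 S_gt1; lia.
by rewrite -!card_gt0 => a0 b0; apply: kappa_star_ge_mixed_large.
Qed.

End KbipKappa.

Theorem corollary3p8 (m1 m2 s : nat) :
  (2 <= m1)%N -> (m1 <= m2)%N -> (2 <= s)%N ->
  [/\ ((s <= m2 - m1 + 2)%N ->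
        forall S : {set ('I_m1 + 'I_m2)%type},
          #|S| = s -> ~~ (S \subset @partX m1 m2) ->
          kappa_star (@kbip m1 m2) S = m1),
      ((s <= m1)%N ->
        forall S : {set ('I_m1 + 'I_m2)%type},
          S \subset @partX m1 m2 -> #|S| = s ->
          kappa_star (@kbip m1 m2) S = m2) &
      ((m2 - m1 + 3 <= s)%N -> (s <= m1 + m2)%N ->
        (m1%:R - (m1 + s - m2 + 2)%:R / 3%:R <=
           (kappa_s (@kbip m1 m2) s)%:R :> rat)%R)].
Proof.
move=> m1_ge2 m12 s_ge2; split.
- move=> sS S Ss /subsetPn[[x | y] yS]; first by rewrite inE.
  by move=> _; apply: kappa_star_meetY yS _; rewrite -Ss in s_ge2 sS.
- (* s <= m1 is implied by S \subset X. *)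
  by move=> _ S SX Ss; apply: kappa_star_subX SX; rewrite -Ss in s_ge2.
move=> sS sm; set c := (m1 + s - m2 + 2)%N.
have sT : s <= #|{: 'I_m1 + 'I_m2}| by rewrite card_kbip.
have [S Ss ->] := kappa_s_attained (@kbip m1 m2) sT.
have : (3 * m1 <= 3 * kappa_star (@kbip m1 m2) S + c)%N.
  by rewrite /c -Ss; apply: kappa_star_ge_large; rewrite ?Ss.
rewrite -(ler_nat rat) natrD !natrM => lb; lra.
Qed.
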